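(* Let $\mathcal{A}$ be a pca in which $0,1$ are separable, and let $\gamma:\mathcal{A}\to S$ be a precomplete generalized numbering. Then $\gamma$ is not injective.
   Context: A pca is a set $\mathcal{A}$ with partial binary application containing $k,s$ with $kab=a$, $sab\downarrow$, $sabc\simeq ac(bc)$. With $i=skk$, $\mathsf{false}=ki$, $\langle a,b\rangle=\lambda^*z.zab$ ($\lambda^*$ standard combinatory abstraction), $0=\bar 0=i$, $\overline{n+1}=\langle\mathsf{false},\bar n\rangle$, $1=\bar 1$. $0,1$ are separable in $\mathcal{A}$ if there is a total $c\in\mathcal{A}$ with $ca\in\{0,1\}$ for all $a$ such that $ca=0\Rightarrow a\neq1$ and $ca=1\Rightarrow a\neq 0$. A generalized numbering is a surjective map $\gamma:\mathcal{A}\to S$ onto a set $S$; write $a\sim_\gamma a'$ iff $\gamma(a)=\gamma(a')$. $\gamma$ is precomplete if for every $b\in\mathcal{A}$ there is a total $f\in\mathcal{A}$ (i.e. $fa$ defined for all $a$) such that for all $a\in\mathcal{A}$, $ba\downarrow\Rightarrow fa\sim_\gamma ba$. *)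

Definition appo {A : Type} (app : A -> A -> option A) (x y : option A) : option A :=
  match x, y with
  | Some a, Some b => app a b
  | _, _ => None
  end.

(* A pca: a set with a partial binary application and elements k, s such that
   k a b = a, s a b is defined, and s a b c ~= a c (b c) (Kleene equality,
   i.e. equality of option values). *)
Record pca := {
  carrier :> Type;
  app : carrier -> carrier -> option carrier;
  pk : carrier;
  ps : carrier;
  k_ax : forall a b : carrier,
      appo app (appo app (Some pk) (Some a)) (Some b) = Some a;
  s_def : forall a b : carrier,
      appo app (appo app (Some ps) (Some a)) (Some b) <> None;
  s_ax : forall a b c : carrier,
      appo app (appo app (appo app (Some ps) (Some a)) (Some b)) (Some c)
      = appo app (appo app (Some a) (Some c)) (appo app (Some b) (Some c))
}.

Section Combinators.
Variable A : pca.
Local Notation "x @ y" := (appo (app A) x y) (at level 40, left associativity).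
Local Notation K := (Some (pk A)).
Local Notation S := (Some (ps A)).

Definition c_i : option A := S @ K @ K.
Definition c_false : option A := K @ c_i.
(* <a,b> = lambda* z. z a b, with the standard combinatory abstraction
   (lambda* z.z = i, lambda* z.c = k c, lambda* z.(t u) = s (lambda* z.t) (lambda* z.u)):
   lambda* z. z a b = s (s i (k a)) (k b). *)
Definition c_pair (a b : option A) : option A := S @ (S @ c_i @ (K @ a)) @ (K @ b).
(* numerals: 0 = i, n+1 = <false, n> *)
Definition c_zero : option A := c_i.
Definition c_one : option A := c_pair c_false c_zero.
End Combinators.

Definition separable01 (A : pca) : Prop :=
  exists c : A,
    forall a : A, exists v : A,
      app A c a = Some v /\
      (Some v = c_zero A \/ Some v = c_one A) /\
      (Some v = c_zero A -> Some a <> c_one A) /\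
      (Some v = c_one A -> Some a <> c_zero A).

Definition gen_numbering (A : pca) (S : Type) (gamma : A -> S) : Prop :=
  forall x : S, exists a : A, gamma a = x.

Definition precomplete (A : pca) (S : Type) (gamma : A -> S) : Prop :=
  forall b : A, exists f : A,
    (forall a : A, exists w : A, app A f a = Some w) /\
    (forall a v : A, app A b a = Some v ->
       exists w : A, app A f a = Some w /\ gamma w = gamma v).

Definition injective_fun {X Y : Type} (f : X -> Y) : Prop :=
  forall x y : X, f x = f y -> x = y.

(* If gamma is precomplete and injective, every b agrees with a total f on the
   domain of b, so b f = f f whenever b f is defined.  Diagonalize against the
   separator c with b x = c (x x) 1: since 0 1 = 1 and 1 1 = 0, the value b f
   is the numeral that c (f f) rules out for f f. *)


Section Combinators.
Variable A : pca.
Local Notation "x @ y" := (appo (app A) x y) (at level 40, left associativity).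

Lemma k_spec (a : A) :
  exists ka : A, Some (pk A) @ Some a = Some ka /\ forall b : A, Some ka @ Some b = Some a.
Proof.
  pose proof (k_ax A a a) as Haa.
  destruct (Some (pk A) @ Some a) as [ka|] eqn:Eka; [|discriminate].
  exists ka; split; [reflexivity|].
  intro b; pose proof (k_ax A a b) as Hab; rewrite Eka in Hab; exact Hab.
Qed.

Lemma s_spec (a b : A) :
  exists sab : A, Some (ps A) @ Some a @ Some b = Some sab /\
    forall c : A, Some sab @ Some c = Some a @ Some c @ (Some b @ Some c).
Proof.
  pose proof (s_def A a b) as Hdef.
  destruct (Some (ps A) @ Some a @ Some b) as [sab|] eqn:Esab; [|contradiction].
  exists sab; split; [reflexivity|].
  intro c; pose proof (s_ax A a b c) as Habc; rewrite Esab in Habc; exact Habc.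
Qed.

Lemma c_i_spec : exists i : A, c_i A = Some i /\ forall x : A, Some i @ Some x = Some x.
Proof.
  destruct (s_spec (pk A) (pk A)) as [i [Ei Hi]].
  exists i; split; [exact Ei|].
  intro x; destruct (k_spec x) as [kx [Ekx Hkx]].
  rewrite Hi, Ekx; apply Hkx.
Qed.

Lemma diagonal_combinator (c d : A) :
  exists b : A, forall x : A, Some b @ Some x = Some c @ (Some x @ Some x) @ Some d.
Proof.
  destruct c_i_spec as [i [_ Hi]].
  destruct (k_spec c) as [kc [_ Hkc]].
  destruct (s_spec i i) as [sii [_ Hsii]].
  destruct (s_spec kc sii) as [q [_ Hq]].
  destruct (k_spec d) as [kd [_ Hkd]].
  destruct (s_spec q kd) as [b [_ Hb]].
  exists b; intro x.
  rewrite Hb, Hkd, Hq, Hkc, Hsii, !Hi; reflexivity.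
Qed.

Lemma numerals_apply_one :
  exists z o : A, c_zero A = Some z /\ c_one A = Some o /\
    Some z @ Some o = Some o /\ Some o @ Some o = Some z.
Proof.
  destruct c_i_spec as [i [Ei Hi]].
  destruct (k_spec i) as [fl [Efl Hfl]].
  destruct (k_spec fl) as [kfl [Ekfl Hkfl]].
  destruct (s_spec i kfl) as [p [Ep Hp]].
  destruct (s_spec p fl) as [o [Eo Ho]].
  assert (Ho_app : forall x : A, Some o @ Some x = Some x @ Some fl @ Some i).
  { intro x; rewrite Ho, Hfl, Hp, Hi, Hkfl; reflexivity. }
  exists i, o; split; [exact Ei|]; split.
  - unfold c_one, c_pair, c_zero, c_false.
    rewrite Ei, Efl, Ekfl, Ep; exact Eo.
  - split; [apply Hi|].
    rewrite Ho_app, Ho_app, Hfl, !Hi; reflexivity.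
Qed.

End Combinators.

Lemma precomplete_injective_self_app (A : pca) (S : Type) (gamma : A -> S) :
  precomplete A S gamma -> injective_fun gamma ->
  forall b : A, exists f v : A,
    app A f f = Some v /\ forall w : A, app A b f = Some w -> v = w.
Proof.
  intros Hpre Hinj b.
  destruct (Hpre b) as [f [Ftot Fext]].
  destruct (Ftot f) as [v Hv].
  exists f, v; split; [exact Hv|].
  intros w Hw.
  destruct (Fext f w Hw) as [w' [Hw' Hgamma]].
  rewrite Hv in Hw'; injection Hw' as <-.
  exact (Hinj v w Hgamma).
Qed.

Theorem mainTheorem15 (A : pca) (S : Type) (gamma : A -> S)
  (hsep : separable01 A)
  (hnum : gen_numbering A S gamma)
  (hpre : precomplete A S gamma) :
  ~ injective_fun gamma.
Proof.
  intro Hinj.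
  destruct hsep as [c Hc].
  destruct (numerals_apply_one A) as [z [o [Ez [Eo [Hzo Hoo]]]]].
  destruct (diagonal_combinator A c o) as [b Hb].
  destruct (precomplete_injective_self_app A S gamma hpre Hinj b) as [f [v [Hv Hfix]]].
  destruct (Hc v) as [w [Hw [Hw01 [Hw0 Hw1]]]].
  assert (Hbf : app A b f = appo (app A) (Some w) (Some o)).
  { change (appo (app A) (Some b) (Some f) = appo (app A) (Some w) (Some o)).
    rewrite Hb; simpl; rewrite Hv; simpl; rewrite Hw; reflexivity. }
  destruct Hw01 as [Hwz | Hwo].
  - apply (Hw0 Hwz); rewrite Eo; f_equal; apply Hfix.
    rewrite Ez in Hwz; injection Hwz as ->; rewrite Hbf; exact Hzo.
  - apply (Hw1 Hwo); rewrite Ez; f_equal; apply Hfix.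
    rewrite Eo in Hwo; injection Hwo as ->; rewrite Hbf; exact Hoo.
Qed.
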